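(* Let $q$ be a query, let $\pi_q$ be a finite ranked list of documents, and for each $d\in\pi_q$ let $\lambda(d|\pi_q)\in\mathbb{R}$ be a fixed weight, $r(d)\in\{0,1\}$ a fixed (deterministic) relevance judgment, and $k(d)$ the position of $d$ in the logged ranked list for $q$. Let $U$ be a finite set of users and $P(\cdot|q)$ a probability distribution on $U$. A session is generated by drawing a user $u\sim P(\cdot|q)$ and then, for each $d\in\pi_q$, a binary examination variable $e(d)\in\{0,1\}$ with $P(e(d)=1\mid u)=P(e(d)=1|k(d),u)$; clicks are $c(d)=e(d)\cdot r(d)$, and $\vec c=(c(d))_{d\in\pi_q}$. Define the user-aware estimator $$\hat{l}_{user\text{-}aware}(S|q,\vec{c})=\sum_{d\in\pi_q}\frac{\lambda(d|\pi_q)\,c(d)}{\sum_{u'\in U}P(e(d)=1|k(d),u')\,P(u'|q)},$$ and the ideal loss $l_{ideal}(S|q)=\sum_{d\in\pi_q}\lambda(d|\pi_q)\,r(d)$. Suppose that for every $d\in\pi_q$ with $r(d)=1$ we have $\sum_{u\in U}P(e(d)=1|k(d),u)P(u|q)>0$. Then $$\mathbb{E}_{u,e}\big[\hat{l}_{user\text{-}aware}(S|q,\vec{c})\big]=l_{ideal}(S|q),$$ where the expectation is over the random user $u$ and the examinations $e$.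
   Context: This is the unbiased-learning-to-rank setting with a position-based examination model personalized per user: each user $u$ examines the document at position $k$ with probability $P(e=1|k,u)$, and a document is clicked iff it is examined and judged relevant (examination hypothesis $c=e\cdot r$). $S$ denotes the ranking model producing $\pi_q$; it enters only through the fixed weights $\lambda(d|\pi_q)$. Convention: a summand whose numerator $c(d)$ is $0$ is taken to be $0$ (relevant only for documents with $r(d)=0$, which are never clicked). *)

From mathcomp Require Import all_boot all_order all_algebra.
Set Implicit Arguments. Unset Strict Implicit. Unset Printing Implicit Defensive.
Import Order.TTheory GRing.Theory Num.Theory.
Local Open Scope ring_scope.

(* Documents of pi_q: a finite type D.  Users: a finite type U.
   An examination outcome is e : {ffun D -> bool}.
   Clicks: c(d) = e(d) * r(d). *)
Definition click {R : ringType} {D : finType} (r : D -> bool)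
  (e : {ffun D -> bool}) (d : D) : R := (e d)%:R * (r d)%:R.

Definition user_propensity {R : ringType} {D U : finType}
  (theta : nat -> U -> R) (k : D -> nat) (Pu : U -> R) (d : D) : R :=
  \sum_(u' : U) theta (k d) u' * Pu u'.

(* User-aware estimator.  Summands with c(d) = 0 are 0 (also with x/0 = 0). *)
Definition l_user_aware {R : fieldType} {D U : finType}
  (lambda : D -> R) (theta : nat -> U -> R) (k : D -> nat) (Pu : U -> R)
  (c : D -> R) : R :=
  \sum_(d : D) (lambda d * c d) / user_propensity theta k Pu d.

Definition l_ideal {R : ringType} {D : finType} (lambda : D -> R) (r : D -> bool) : R :=
  \sum_(d : D) lambda d * (r d)%:R.

From mathcomp Require Import all_boot all_order all_algebra.
Import Order.TTheory GRing.Theory Num.Theory.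
Local Open Scope ring_scope.
Set Implicit Arguments. Unset Strict Implicit.

(* By the examination hypothesis and the law of
   total probability, E[c(d)] = sum_u P(u|q) P(e(d)=1|k(d),u) r(d), which is the
   user-aware propensity of d times r(d).  Dividing by that propensity (nonzero
   whenever r(d) = 1) leaves lambda(d) r(d), and linearity of expectation sums
   these terms to the ideal loss. *)

Lemma sum_mul_natr_pred (R : pzSemiRingType) (I : finType) (P : pred I) (w : I -> R) :
  \sum_(i : I) w i * (P i)%:R = \sum_(i | P i) w i.
Proof.
by rewrite [RHS]big_mkcond; apply: eq_bigr => i _; case: (P i); rewrite ?mulr1 ?mulr0.
Qed.

Lemma sum_mul_click (R : comNzRingType) (D : finType) (r : D -> bool)
    (w : {ffun D -> bool} -> R) (d : D) :
  \sum_(e : {ffun D -> bool}) w e * click r e d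
  = (\sum_(e : {ffun D -> bool} | e d) w e) * (r d)%:R.
Proof.
rewrite -(sum_mul_natr_pred (fun e : {ffun D -> bool} => e d)) big_distrl.
by apply: eq_bigr => e _; rewrite /click mulrA.
Qed.

Lemma expected_click (R : comNzRingType) (D U : finType) (r : D -> bool)
    (k : D -> nat) (Pu : U -> R) (theta : nat -> U -> R)
    (Pe : U -> {ffun D -> bool} -> R)
    (Pe_marg : forall u d, \sum_(e : {ffun D -> bool} | e d) Pe u e = theta (k d) u)
    (d : D) :
  \sum_(u : U) \sum_(e : {ffun D -> bool}) Pu u * Pe u e * click r e d
  = user_propensity theta k Pu d * (r d)%:R.
Proof.
rewrite /user_propensity big_distrl; apply: eq_bigr => u _.
under eq_bigr do rewrite -mulrA.
by rewrite -big_distrr /= sum_mul_click Pe_marg mulrA [Pu u * _]mulrC.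
Qed.

Lemma expected_l_user_aware (R : fieldType) (D U I : finType)
    (lambda : D -> R) (theta : nat -> U -> R) (k : D -> nat) (Pu : U -> R)
    (w : U -> I -> R) (c : I -> D -> R) :
  \sum_(u : U) \sum_(i : I) w u i * l_user_aware lambda theta k Pu (c i)
  = \sum_(d : D) lambda d / user_propensity theta k Pu d
      * \sum_(u : U) \sum_(i : I) w u i * c i d.
Proof.
under eq_bigr do under eq_bigr do rewrite big_distrr.
under eq_bigr do rewrite exchange_big.
rewrite exchange_big; apply: eq_bigr => d _.
rewrite big_distrr; apply: eq_bigr => u _ /=.
rewrite big_distrr; apply: eq_bigr => i _ /=.
by rewrite mulrCA mulrACA [RHS]mulrACA [c i d * _]mulrC.
Qed.

(* Pu u = P(u|q); theta n u = P(e=1 | position n, user u); k d = logged position;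
   Pe u e = conditional law of the examination vector e given user u, whose
   marginals are P(e(d)=1|u) = theta (k d) u (no independence assumed). *)
Theorem theorem3p1 (R : realFieldType) (D U : finType)
  (lambda : D -> R) (r : D -> bool) (k : D -> nat)
  (Pu : U -> R) (theta : nat -> U -> R) (Pe : U -> {ffun D -> bool} -> R)
  (Pu_ge0 : forall u, 0 <= Pu u) (Pu_sum1 : \sum_(u : U) Pu u = 1)
  (Pe_ge0 : forall u e, 0 <= Pe u e)
  (Pe_sum1 : forall u, \sum_(e : {ffun D -> bool}) Pe u e = 1)
  (Pe_marg : forall u d, \sum_(e : {ffun D -> bool} | e d) Pe u e = theta (k d) u)
  (Hpos : forall d, r d -> 0 < user_propensity theta k Pu d) :
  \sum_(u : U) \sum_(e : {ffun D -> bool})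
      Pu u * Pe u e * l_user_aware lambda theta k Pu (click r e)
  = l_ideal lambda r.
Proof.
rewrite (expected_l_user_aware lambda theta k Pu (fun u e => Pu u * Pe u e)) /l_ideal.
apply: eq_bigr => d _; rewrite (expected_click r Pu Pe_marg) -mulrA.
case rd: (r d); last by rewrite /= !mulr0.
by rewrite mulKf ?gt_eqF ?Hpos.
Qed.
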